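(* For each $n$ let $\mathbf{v}=\mathbf{v}_n$, $\mathbf{w}=\mathbf{w}_n$, $\bar{\mathbf{v}}=\bar{\mathbf{v}}_n$ be random vectors in $\mathbb{R}^n$ with $\delta_n:=\min_{i\in[n]}|\bar v_i|>0$, and let $p=p_n\to\infty$. If $\min_{s=\pm1}\|s\mathbf{v}-\bar{\mathbf{v}}-\mathbf{w}\|_p=o_{\mathbb P}(n^{1/p}\delta_n;p)$, then $\limsup_{n\to\infty}p^{-1}\log\Big(\frac1n\mathbb{E}\min_{s=\pm1}|\{i\in[n]:s\,\mathrm{sgn}(v_i)\ne\mathrm{sgn}(\bar v_i)\}|\Big)\le\limsup_{\varepsilon\to0}\limsup_{n\to\infty}p^{-1}\log\Big(\frac1n\sum_{i=1}^n\mathbb{P}\big(-w_i\,\mathrm{sgn}(\bar v_i)\ge(1-\varepsilon)|\bar v_i|\big)\Big)$.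
   Context: $\mathrm{sgn}$ is the sign function; $\|\cdot\|_p$ is the vector $\ell_p$ norm; $\log0=-\infty$. For random $X_n,Y_n$ and deterministic $r_n>0$: $X_n=O_{\mathbb P}(Y_n;r_n)$ means there is a constant $C_1>0$ such that for every $C>0$ there exist $C'>0,N$ with $\mathbb{P}(|X_n|\ge C'|Y_n|)\le C_1e^{-Cr_n}$ for $n\ge N$; $X_n=o_{\mathbb P}(Y_n;r_n)$ means $X_n=O_{\mathbb P}(w_nY_n;r_n)$ for some deterministic $w_n\to0$. *)

From HB Require Import structures.
From mathcomp Require Import all_boot all_order all_algebra.
From mathcomp Require Import all_classical all_reals all_analysis.
Set Implicit Arguments. Unset Strict Implicit. Unset Printing Implicit Defensive.
Import Order.TTheory GRing.Theory Num.Theory.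
Import numFieldNormedType.Exports.
Local Open Scope classical_set_scope.
Local Open Scope ring_scope.

Definition lpnorm {R : realType} (n : nat) (p : R) (u : 'I_n -> R) : R :=
  (\sum_(i < n) `|u i| `^ p) `^ p^-1.

(* delta = min_i |u_i| (as an extended real; +oo for the empty vector n = 0) *)
Definition min_abs {R : realType} (n : nat) (u : 'I_n -> R) : \bar R :=
  \big[Order.min/+oo%E]_(i < n) (`|u i|)%:E.

Definition sign_dist {R : realType} (n : nat) (p : R) (v vb w : 'I_n -> R) : R :=
  Num.min (lpnorm p (fun i => v i - vb i - w i))
          (lpnorm p (fun i => - v i - vb i - w i)).

Definition sign_err {R : realType} (n : nat) (v vb : 'I_n -> R) : nat :=
  minn #|[set i : 'I_n | Num.sg (v i) != Num.sg (vb i)]|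
       #|[set i : 'I_n | - Num.sg (v i) != Num.sg (vb i)]|.

(* logarithm on extended reals, with log 0 = -oo *)
Definition elog {R : realType} (x : \bar R) : \bar R :=
  match x with
  | r%:E => if r <= 0 then -oo%E else (ln r)%:E
  | +oo%E => +oo%E
  | -oo%E => -oo%E
  end.

(* X_n = o_P(Y_n ; r_n) with X_n, Y_n given as (extended-real) valued random
   variables on probability spaces P n:
   exists deterministic wn -> 0, exists C1 > 0, forall C > 0, exists C' > 0, N,
   forall n >= N, P(|X_n| >= C' |wn Y_n|) <= C1 exp(-C r_n). *)
Definition little_oP {R : realType} (d : nat -> measure_display)
  (T : forall n, measurableType (d n)) (P : forall n, probability (T n) R)
  (X : forall n, T n -> R) (Y : forall n, T n -> \bar R) (r : nat -> R) : Prop :=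
  exists wn : nat -> R, wn @ \oo --> 0 /\
  exists2 C1 : R, 0 < C1 &
  forall C : R, 0 < C ->
  exists2 C' : R, 0 < C' &
  exists N : nat, forall n : nat, (N <= n)%N ->
    (P n [set x | ((C' * `|wn n|)%:E * `|Y n x| <= (`|X n x|)%:E)%E]
      <= (C1 * expR (- (C * r n)))%:E)%E.

(* Fix eps > 0 and a level M above the exponential rate of the noise
   probabilities P(-w_i sgn(vb_i) >= (1 - eps)|vb_i|).  Where s v_i and vb_i
   have different signs, either that noise event occurs or
   |s v_i - vb_i - w_i| > eps |vb_i| >= eps delta; by Markov's inequality in
   l_p, on the event ||s v - vb - w||_p <= a n^(1/p) delta the second case
   occurs at most n (a/eps)^p times.  With a = C' |r_n|, where r_n -> 0 is the
   deterministic rate of the o_P hypothesis, the mean sign error is therefore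
   at most the mean noise probability, plus (a/eps)^p, plus the probability
   C1 exp(-C p) of the complementary event.  For C > -M each of the three terms
   is eventually at most exp(p M), so the sign error has rate at most M. *)

From HB Require Import structures.
From mathcomp Require Import all_boot all_order all_algebra.
From mathcomp Require Import all_classical all_reals all_analysis.
From mathcomp Require Import measurable_realfun lra.
Set Implicit Arguments.
Unset Strict Implicit.
Unset Printing Implicit Defensive.
Import Order.TTheory GRing.Theory Num.Theory.
Import numFieldNormedType.Exports.
Local Open Scope classical_set_scope.
Local Open Scope ring_scope.

Section exponential_rate.
Context {R : realType}.
Local Open Scope ereal_scope.

Lemma lee_of_ltEFin (x y : \bar R) :
  (forall M : R, y < M%:E -> x <= M%:E) -> x <= y.
Proof.
case: y => [y| |] xM.
- apply/lee_addgt0Pr => e e0; rewrite -EFinD; apply: xM.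
  by rewrite lte_fin ltrDl.
- by rewrite leey.
- case: x xM => [x| |] xM //; last by have := xM 0%R (ltNyr _).
  have := xM (x - 1)%R (ltNyr _); rewrite lee_fin => x1x.
  by have := ltrBlDr x 1 x; rewrite ltrDl ltr01 ltNge x1x.
Qed.

Lemma limn_esup_le_near (u : (\bar R)^nat) (M : R) :
  (forall e : R, (0 < e)%R -> \forall n \near \oo, u n <= (M + e)%:E) ->
  limn_esup u <= M%:E.
Proof.
move=> uM; apply/lee_addgt0Pr => e e0.
have [N _ uNM] := uM e e0.
apply: (@le_trans _ _ (ereal_sup (u @` [set n | (N <= n)%N]))).
  by apply: ereal_inf_lbound; exists [set n | (N <= n)%N] => //; exists N.
by apply: ge_ereal_sup => _ [n Nn <-]; rewrite -EFinD; exact: uNM.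
Qed.

Lemma limn_esup_lt_near (u : (\bar R)^nat) (M : \bar R) :
  limn_esup u < M -> \forall n \near \oo, u n < M.
Proof.
move=> /ereal_inf_lt [_ [V oV <-] VM].
apply: filterS oV => n Vn; apply: le_lt_trans VM.
by apply: ereal_sup_ubound; exists n.
Qed.

Lemma mul_elog_le_ln (p r : R) (x : \bar R) : (0 < p)%R -> (0 < r)%R ->
  x <= r%:E -> (p^-1)%:E * elog x <= (p^-1 * ln r)%:E.
Proof.
move=> p0 r0; have ninfty : (p^-1)%:E * -oo <= (p^-1 * ln r)%:E.
  by rewrite mulrNy gtr0_sg ?invr_gt0 // mul1e leNye.
case: x => [x| |] //= xr.
case: ifPn => [_|] //.
rewrite -ltNge -EFinM lee_fin => x0.
by rewrite ler_pM2l ?invr_gt0 // ler_ln ?posrE // -lee_fin.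
Qed.

Lemma mul_elog_lt_le_expR (p M : R) (x : \bar R) : (0 < p)%R ->
  (p^-1)%:E * elog x < M%:E -> x <= (expR (p * M))%:E.
Proof.
move=> p0; case: x => [x| |] /=; last by rewrite leNye.
  case: ifPn => [x0 _|]; first by rewrite lee_fin (le_trans x0) ?expR_ge0.
  rewrite -ltNge -EFinM !lte_fin lee_fin => x0 xM.
  rewrite -(lnK x0) ler_expR; rewrite mulrC ltr_pdivrMr // in xM.
  by rewrite mulrC ltW.
by rewrite mulry gtr0_sg ?invr_gt0 // mul1e.
Qed.

Definition exp_rate (p : nat -> R) (u : (\bar R)^nat) : \bar R :=
  limn_esup (fun n => ((p n)^-1)%:E * elog (u n)).

Lemma exp_rate_le (p : nat -> R) (u : (\bar R)^nat) (k M : R) :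
  p @ \oo --> +oo%R -> (0 < k)%R ->
  (\forall n \near \oo, u n <= (k * expR (p n * M))%:E) -> exp_rate p u <= M%:E.
Proof.
move=> /cvgryPgt p_oo k0 ukM; apply: limn_esup_le_near => e e0.
near=> n.
have p0 : (0 < p n)%R by near: n; exact: p_oo.
have pk : (ln k / e < p n)%R by near: n; exact: p_oo.
have kM0 : (0 < k * expR (p n * M))%R by rewrite mulr_gt0 ?expR_gt0.
apply: le_trans (mul_elog_le_ln p0 kM0 _) _; first by near: n.
rewrite lee_fin lnM ?posrE ?expR_gt0 // expRK mulrDr mulrA mulVf ?gt_eqF //.
by rewrite mul1r addrC lerD2l mulrC ler_pdivrMr // mulrC ltW // -ltr_pdivrMr.
Unshelve. all: by end_near.
Qed.

Lemma exp_rate_lt (p : nat -> R) (u : (\bar R)^nat) (M : R) :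
  p @ \oo --> +oo%R -> exp_rate p u < M%:E ->
  \forall n \near \oo, u n <= (expR (p n * M))%:E.
Proof.
move=> /cvgryPgt p_oo /limn_esup_lt_near uM.
near=> n; apply: mul_elog_lt_le_expR; first by near: n; exact: p_oo.
by near: n.
Unshelve. all: by end_near.
Qed.

Lemma near_powR_cvg0_le_expR (p r : nat -> R) (K M : R) :
  p @ \oo --> +oo%R -> r @ \oo --> 0%R -> (0 < K)%R ->
  \forall n \near \oo, ((K * `|r n|) `^ p n <= expR (p n * M))%R.
Proof.
move=> /cvgryPgt p_oo r0 K0.
have rM := cvgr0_norm_lt _ r0 _ (divr_gt0 (expR_gt0 M) K0).
near=> n.
have p0 : (0 < p n)%R by near: n; exact: p_oo.
rewrite [(p n * M)%R]mulrC expRM.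
apply: (ge0_ler_powR (ltW p0)); rewrite ?nnegrE ?expR_ge0 ?mulr_ge0 ?(ltW K0) //.
apply/ltW; rewrite mulrC -ltr_pdivlMr //; near: n; exact: rM.
Unshelve. all: by end_near.
Qed.

Lemma near_expR_tail_le_expR (p : nat -> R) (C1 C M : R) :
  p @ \oo --> +oo%R -> (0 < C1)%R -> (- M < C)%R ->
  \forall n \near \oo, (C1 * expR (- (C * p n)) <= expR (p n * M))%R.
Proof.
move=> /cvgryPgt p_oo C10 MC.
have CM0 : (0 < C + M)%R by rewrite -ltrBlDr sub0r.
near=> n.
have pC1 : (ln C1 / (C + M) < p n)%R by near: n; exact: p_oo.
rewrite ltr_pdivrMr // in pC1.
by rewrite -[X in (X * _)%R](lnK C10) -expRD ler_expR; nra.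
Unshelve. all: by end_near.
Qed.

Lemma limf_esup_ge_near (F : set_system R) {FF : ProperFilter F}
    (f : R -> \bar R) (x : \bar R) :
  (\forall e \near F, x <= f e) -> x <= limf_esup f F.
Proof.
move=> xf; apply: le_ereal_inf_tmp => _ [V FV <-].
have [e [Ve xe]] := filter_ex (filterI FV xf).
by apply: le_trans xe _; apply: ereal_sup_ubound; exists e.
Qed.

End exponential_rate.

Lemma sgr_neq_split (R : realFieldType) (sv vb w eps : R) : vb != 0 ->
  Num.sg sv != Num.sg vb ->
  (1 - eps) * `|vb| <= - w * Num.sg vb \/ eps * `|vb| < `|sv - vb - w|.
Proof.
move=> vb0 svb; have [|wvb] := leP ((1 - eps) * `|vb|) (- w * Num.sg vb).
  by left.
right; rewrite ltr_normr; apply/orP.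
case: (ltgtP vb 0) vb0 svb wvb => // vb_sign _.
- rewrite (ltr0_sg vb_sign) (ltr0_norm vb_sign) => svb wvb.
  have : 0 <= sv by case: (ltgtP sv 0) svb => // sv0; rewrite ltr0_sg ?eqxx.
  by left; nra.
- rewrite (gtr0_sg vb_sign) (gtr0_norm vb_sign) => svb wvb.
  have : sv <= 0 by case: (ltgtP sv 0) svb => // sv0; rewrite ?gtr0_sg ?eqxx // ltW.
  by right; nra.
Qed.

Section lp_counting.
Context {R : realType}.

Lemma card_set_finset (n : nat) (b : pred 'I_n) :
  #|[set i | b i] : set 'I_n| = #|[set i | b i]%SET|.
Proof. by apply: eq_card => i; rewrite [RHS]inE; apply/idP/idP; rewrite in_setE. Qed.

Lemma lpnorm_powR (n : nat) (p : R) (u : 'I_n -> R) : 0 < p ->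
  lpnorm p u `^ p = \sum_(i < n) `|u i| `^ p.
Proof.
move=> p0; rewrite /lpnorm -powRrM mulVf ?gt_eqF // powRr1 //.
by apply: sumr_ge0 => i _; exact: powR_ge0.
Qed.

Lemma card_gt_le_lpnorm (n : nat) (u : 'I_n -> R) (p b c : R) :
  0 < p -> 0 <= b -> 0 < c -> lpnorm p u <= b * n%:R `^ p^-1 ->
  #|[set i | c < `|u i|]%SET|%:R <= n%:R * (b / c) `^ p.
Proof.
move=> p0 b0 c0 ub.
have cnt : #|[set i | c < `|u i|]%SET|%:R * c `^ p <= \sum_(i < n) `|u i| `^ p.
  rewrite mulr_natl -sumr_const big_mkcond /=.
  apply: ler_sum => i _; rewrite inE; case: ifP => [cu|_]; last exact: powR_ge0.
  by apply: (ge0_ler_powR (ltW p0)); rewrite ?nnegrE ?normr_ge0 ?(ltW c0) ?(ltW cu).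
have bn : \sum_(i < n) `|u i| `^ p <= n%:R * (b / c) `^ p * c `^ p.
  have -> : n%:R * (b / c) `^ p * c `^ p = (b * n%:R `^ p^-1) `^ p.
    rewrite -mulrA -powRM ?divr_ge0 ?(ltW c0) // divfK ?gt_eqF //.
    by rewrite powRM ?powR_ge0 // -powRrM mulVf ?gt_eqF // powRr1 // mulrC.
  rewrite -lpnorm_powR //.
  by apply: (ge0_ler_powR (ltW p0)); rewrite ?nnegrE ?mulr_ge0 ?powR_ge0.
by rewrite -(ler_pM2r (powR_gt0 p c0)) (le_trans cnt).
Qed.

Lemma card_sgr_neq_le (n : nat) (p eps a delta : R) (sv vb w : 'I_n -> R) :
  0 < p -> 0 < eps -> 0 <= a -> 0 < delta -> (forall i, delta <= `|vb i|) ->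
  lpnorm p (fun i => sv i - vb i - w i) <= a * n%:R `^ p^-1 * delta ->
  #|[set i | Num.sg (sv i) != Num.sg (vb i)]%SET|%:R <=
    #|[set i | (1 - eps) * `|vb i| <= - w i * Num.sg (vb i)]%SET|%:R
    + n%:R * (a / eps) `^ p.
Proof.
move=> p0 e0 a0 d0 vbd small.
set A := [set i | _ <= _]%SET.
set Q := [set i | eps * delta < `|sv i - vb i - w i|]%SET.
have sub : [set i | Num.sg (sv i) != Num.sg (vb i)]%SET \subset A :|: Q.
  apply/fintype.subsetP => i; rewrite !inE => svb.
  have vb0 : vb i != 0 by rewrite -normr_gt0 (lt_le_trans d0).
  case: (sgr_neq_split (w i) eps vb0 svb) => [-> // | big].
  by apply/orP; right; apply: le_lt_trans big; rewrite ler_pM2l.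
apply: (@le_trans _ _ (#|A|%:R + #|Q|%:R)).
  by rewrite -natrD ler_nat (leq_trans (subset_leq_card sub)) // cardsU leq_subr.
rewrite lerD2l (_ : a / eps = (a * delta) / (eps * delta)); last first.
  by rewrite invfM mulrACA divff ?gt_eqF // mulr1.
by apply: card_gt_le_lpnorm; rewrite ?mulr_ge0 ?mulr_gt0 ?(ltW d0) // mulrAC.
Qed.

Lemma sign_err_le (n : nat) (p eps a delta : R) (v vb w : 'I_n -> R) :
  0 < p -> 0 < eps -> 0 <= a -> 0 < delta -> (forall i, delta <= `|vb i|) ->
  sign_dist p v vb w <= a * n%:R `^ p^-1 * delta ->
  (sign_err v vb)%:R <=
    #|[set i | (1 - eps) * `|vb i| <= - w i * Num.sg (vb i)]%SET|%:R
    + n%:R * (a / eps) `^ p.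
Proof.
move=> p0 e0 a0 d0 vbd; rewrite /sign_dist /sign_err ge_min => /orP[small|small].
- apply: le_trans (card_sgr_neq_le p0 e0 a0 d0 vbd small).
  by rewrite ler_nat card_set_finset geq_minl.
- apply: le_trans (card_sgr_neq_le (sv := fun i => - v i) p0 e0 a0 d0 vbd small).
  rewrite ler_nat card_set_finset (@card_set_finset _ (fun i => _ != _)).
  have -> : [set i | Num.sg (- v i) != Num.sg (vb i)]%SET =
      [set i | - Num.sg (v i) != Num.sg (vb i)]%SET.
    by apply/setP => i; rewrite !inE sgrN.
  exact: geq_minr.
Qed.

End lp_counting.

Section measurability.
Context {R : realType} {d : measure_display} {T : measurableType d}.

(* [Num.sg] unfolds to a nested [if] on [x == 0] and [x < 0]. *)
Lemma measurable_sgr : measurable_fun setT (Num.sg : R -> R).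
Proof.
apply: measurable_fun_ifT => //; first exact: measurable_fun_eqr.
by apply: measurable_fun_ifT => //; exact: measurable_fun_ltr.
Qed.

Lemma measurable_bigmin (n : nat) (F : 'I_n -> T -> \bar R) :
  (forall i, measurable_fun setT (F i)) ->
  measurable_fun setT (fun x => \big[Order.min/+oo%E]_(i < n) F i x).
Proof.
elim: n F => [|n IH] F mF.
  by under eq_fun do rewrite big_ord0; exact: measurable_cst.
under eq_fun do rewrite big_ord_recr /=.
by apply: measurable_mine => //; exact: (IH (fun i => F (widen_ord (leqnSn n) i))).
Qed.

Lemma measurable_min_abs (n : nat) (u : T -> 'I_n -> R) :
  (forall i, measurable_fun setT (fun x => u x i)) ->
  measurable_fun setT (fun x => min_abs (u x)).
Proof.
move=> mu; apply: (@measurable_bigmin n (fun i x => (`|u x i|)%:E)) => i.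
by apply/measurable_EFinP; exact: measurableT_comp.
Qed.

Lemma measurable_lpnorm (n : nat) (p : R) (u : T -> 'I_n -> R) :
  (forall i, measurable_fun setT (fun x => u x i)) ->
  measurable_fun setT (fun x => lpnorm p (u x)).
Proof.
move=> mu; apply: (measurableT_comp (measurable_powR _)).
apply: measurable_sum => i; apply: (measurableT_comp (measurable_powR _)).
exact: measurableT_comp.
Qed.

Lemma measurable_sign_dist (n : nat) (p : R) (v vb w : T -> 'I_n -> R) :
  (forall i, measurable_fun setT (fun x => v x i)) ->
  (forall i, measurable_fun setT (fun x => vb x i)) ->
  (forall i, measurable_fun setT (fun x => w x i)) ->
  measurable_fun setT (fun x => sign_dist p (v x) (vb x) (w x)).
Proof.
move=> mv mvb mw; apply: measurable_minr; apply: measurable_lpnorm => i.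
  by apply: measurable_funB => //; exact: measurable_funB.
by apply: measurable_funB => //; apply: measurable_funB => //; exact: measurable_funN.
Qed.

Lemma measurable_noise_event (n : nat) (w vb : T -> 'I_n -> R) (eps : R)
    (i : 'I_n) :
  measurable_fun setT (fun x => w x i) -> measurable_fun setT (fun x => vb x i) ->
  measurable [set x | (1 - eps) * `|vb x i| <= - w x i * Num.sg (vb x i)].
Proof.
move=> mw mvb; rewrite -[X in measurable X]setTI.
apply: measurable_fun_le => //.
  by apply: measurable_funM => //; exact: measurableT_comp.
apply: measurable_funM; first exact: measurable_funN.
exact: measurableT_comp measurable_sgr _.
Qed.

Lemma measurable_large_sign_dist (n : nat) (p a : R) (v vb w : T -> 'I_n -> R) :
  (forall i, measurable_fun setT (fun x => v x i)) ->
  (forall i, measurable_fun setT (fun x => vb x i)) ->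
  (forall i, measurable_fun setT (fun x => w x i)) ->
  measurable [set x | (a%:E * `|(n%:R `^ p^-1)%:E * min_abs (vb x)| <=
                       (`|sign_dist p (v x) (vb x) (w x)|)%:E)%E].
Proof.
move=> mv mvb mw; rewrite -[X in measurable X]setTI.
apply: measurable_lee => //.
  apply: measurable_funeM; apply: measurableT_comp => //.
  by apply: measurable_funeM; exact: measurable_min_abs.
apply/measurable_EFinP; apply: measurableT_comp => //.
exact: measurable_sign_dist.
Qed.

End measurability.

Section expectation.
Context {R : realType} {d : measure_display} {T : measurableType d}.
Local Open Scope ereal_scope.

(* The nonnegative integral is a supremum over simple minorants, hence
   monotone even for nonmeasurable integrands. *)
Lemma ge0_le_integral_nonmeas (mu : {measure set T -> \bar R}) (f g : T -> \bar R) :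
  (forall x, 0 <= f x) -> (forall x, f x <= g x) ->
  \int[mu]_x f x <= \int[mu]_x g x.
Proof.
move=> f0 fg; have g0 x : 0 <= g x by exact: le_trans (f0 x) (fg x).
rewrite !ge0_integralTE //; apply: ereal_sup_le => _ [h hf <-].
by exists h => //= x; exact: le_trans (hf x) (fg x).
Qed.

Lemma integral_le_indic (P : probability T R) (I : finType) (A : I -> set T)
    (B : set T) (f : T -> R) (c m : R) :
  (forall i, measurable (A i)) -> measurable B -> (0 <= c)%R -> (0 <= m)%R ->
  (forall x, 0 <= f x)%R ->
  (forall x, f x <= \sum_(i : I) \1_(A i) x + c + m * \1_B x)%R ->
  \int[P]_x (f x)%:E <= \sum_(i : I) P (A i) + c%:E + m%:E * P B.
Proof.
move=> mA mB c0 m0 f0 fle.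
have mI (D : set T) : measurable D -> measurable_fun setT (fun x => (\1_D x : R)%:E).
  by move=> mD; apply/measurable_EFinP; exact: measurable_indic.
have mIA : measurable_fun setT (fun x => \sum_(i : I) (\1_(A i) x : R)%:E).
  by apply: emeasurable_sum => i; exact: mI.
have IA0 x : 0 <= \sum_(i : I) (\1_(A i) x : R)%:E by apply: sume_ge0 => i _.
pose g x := \sum_(i : I) (\1_(A i) x : R)%:E + c%:E + m%:E * (\1_B x)%:E.
apply: (@le_trans _ _ (\int[P]_x g x)).
  apply: ge0_le_integral_nonmeas => x; first by rewrite lee_fin.
  by rewrite /g sumEFin -EFinM -!EFinD lee_fin.
rewrite /g ge0_integralD //; last 4 first.
- by move=> x _; rewrite adde_ge0 ?IA0 ?lee_fin.
- by apply: emeasurable_funD => //; exact: measurable_cst.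
- by move=> x _; rewrite mule_ge0 ?lee_fin.
- by apply: measurable_funeM; exact: mI.
rewrite ge0_integralD //.
rewrite (@ge0_integral_sum _ _ _ P setT measurableT I (fun i x => (\1_(A i) x)%:E));
  last 2 first.
- by move=> i; exact: mI.
- by move=> i x _; rewrite lee_fin.
under eq_bigr do rewrite integral_indic // setIT.
rewrite integral_cst // (_ : c%:E * P setT = c%:E); last first.
  by rewrite probability_setT mule1.
rewrite ge0_integralZl_EFin //; last exact: mI.
by rewrite integral_indic // setIT.
Qed.

Lemma sumr_indic_card (n : nat) (b : 'I_n -> T -> bool) (x : T) :
  (\sum_(i < n) \1_[set y | b i y] x = #|[set i | b i x]%SET|%:R :> R)%R.
Proof.
rewrite -sumr_const [RHS]big_mkcond /=; apply: eq_bigr => i _.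
rewrite indicE inE; case: ifPn => bix; first by rewrite mem_set.
by rewrite memNset //; exact/negP.
Qed.

Lemma min_abs_gt0 (n : nat) (u : 'I_n -> R) : (0 < n)%N ->
  0 < min_abs u -> exists2 delta : R, (0 < delta)%R &
    min_abs u = delta%:E /\ forall i, (delta <= `|u i|)%R.
Proof.
move=> n0; have uge i : min_abs u <= (`|u i|)%:E by exact: bigmin_le.
case E: (min_abs u) => [delta| |] //= delta0; last first.
  by have := uge (Ordinal n0); rewrite E.
exists delta; first by rewrite -lte_fin.
by split => // i; rewrite -lee_fin -E.
Qed.

Lemma expected_sign_err_le (P : probability T R) (n : nat) (v vb w : T -> 'I_n -> R)
    (p eps a : R) :
  (forall i, measurable_fun setT (fun x => v x i)) ->
  (forall i, measurable_fun setT (fun x => vb x i)) ->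
  (forall i, measurable_fun setT (fun x => w x i)) ->
  (forall x, 0 < min_abs (vb x)) ->
  (0 < n)%N -> (0 < p)%R -> (0 < eps)%R -> (0 <= a)%R ->
  (n%:R^-1)%:E * \int[P]_x ((sign_err (v x) (vb x))%:R)%:E <=
    (n%:R^-1)%:E * \sum_(i < n)
      P [set x | (1 - eps) * `|vb x i| <= - w x i * Num.sg (vb x i)]%R
    + ((a / eps) `^ p)%:E
    + P [set x | a%:E * `|(n%:R `^ p^-1)%:E * min_abs (vb x)| <=
                 (`|sign_dist p (v x) (vb x) (w x)|)%:E].
Proof.
move=> mv mvb mw vb0 n0 p0 e0 a0.
pose A i := [set x | (1 - eps) * `|vb x i| <= - w x i * Num.sg (vb x i)]%R.
pose B := [set x | a%:E * `|(n%:R `^ p^-1)%:E * min_abs (vb x)| <=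
                   (`|sign_dist p (v x) (vb x) (w x)|)%:E].
have mA i : measurable (A i) by exact: measurable_noise_event.
have mB : measurable B by exact: measurable_large_sign_dist.
have err_le_n x : ((sign_err (v x) (vb x))%:R <= n%:R :> R)%R.
  by rewrite ler_nat (leq_trans (geq_minl _ _)) // -[X in (_ <= X)%N]card_ord max_card.
have pointwise x : ((sign_err (v x) (vb x))%:R <=
    \sum_(i < n) \1_(A i) x + n%:R * (a / eps) `^ p + n%:R * \1_B x)%R.
  have [Bx|nBx] := pselect (B x).
    rewrite indicE mem_set // mulr1 (le_trans (err_le_n x)) // lerDr.
    by rewrite addr_ge0 ?sumr_ge0 ?mulr_ge0 ?powR_ge0.
  rewrite indicE memNset // mulr0 addr0 sumr_indic_card.
  have [delta d0 [delta_min vbd]] := min_abs_gt0 n0 (vb0 x).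
  apply: (sign_err_le p0 e0 a0 d0 vbd); apply: ltW.
  move/negP: nBx; rewrite /B /= delta_min.
  rewrite -EFinM lee_fin -ltNge => /(le_lt_trans (ler_norm _)).
  by rewrite ger0_norm ?mulr_ge0 ?powR_ge0 ?(ltW d0) // mulrA.
have nR0 : (n%:R != 0 :> R)%R by rewrite pnatr_eq0 -lt0n.
have ninv0 : 0 <= (n%:R^-1)%:E :> \bar R by rewrite lee_fin invr_ge0.
have PA0 : 0 <= \sum_(i < n) P (A i) by apply: sume_ge0.
apply: le_trans (lee_wpmul2l ninv0 (integral_le_indic P mA mB _ _ _ pointwise)) _ => //.
  by rewrite mulr_ge0 ?powR_ge0.
rewrite ge0_muleDr ?adde_ge0 ?mule_ge0 ?lee_fin ?mulr_ge0 ?powR_ge0 //.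
rewrite ge0_muleDr ?lee_fin ?mulr_ge0 ?powR_ge0 //.
by rewrite -EFinM mulrA mulVf // mul1r muleA -EFinM mulVf // mul1e.
Qed.

End expectation.

(* Keeps the index [n] of [v n x i] explicit, as in [lemmaE1]. *)
Unset Implicit Arguments.

Section sign_recovery.
Context {R : realType} {d : nat -> measure_display}
  {T : forall n, measurableType (d n)} {P : forall n, probability (T n) R}
  {v w vb : forall n, T n -> 'I_n -> R} {p : nat -> R}.
Hypothesis mv : forall n (i : 'I_n), measurable_fun setT (fun x => v n x i).
Hypothesis mw : forall n (i : 'I_n), measurable_fun setT (fun x => w n x i).
Hypothesis mvb : forall n (i : 'I_n), measurable_fun setT (fun x => vb n x i).
Hypothesis vb_gt0 : forall n (x : T n), (0 < min_abs (vb n x))%E.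
Hypothesis p_oo : p @ \oo --> +oo.
Hypothesis small : little_oP P (fun n x => sign_dist (p n) (v n x) (vb n x) (w n x))
  (fun n x => ((n%:R `^ (p n)^-1)%:E * min_abs (vb n x))%E) p.

Local Open Scope ereal_scope.

Let mean_sign_err n :=
  (n%:R)^-1%:E * \int[P n]_x ((sign_err (v n x) (vb n x))%:R)%:E.

Let mean_noise_prob (eps : R) n := (n%:R)^-1%:E * \sum_(i < n)
  P n [set x | ((1 - eps) * `|vb n x i| <= - w n x i * Num.sg (vb n x i))%R].

Lemma exp_rate_sign_err_le (eps : R) : (0 < eps)%R ->
  exp_rate p mean_sign_err <= exp_rate p (mean_noise_prob eps).
Proof.
move=> e0; apply: lee_of_ltEFin => M /(exp_rate_lt p_oo) noiseM.
have [r [r0 [C1 C10 tail]]] := small.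
have [C' C'0 [N tailN]] := tail (`|M| + 1)%R (ltr_wpDl (normr_ge0 M) ltr01).
have rM := near_powR_cvg0_le_expR M p_oo r0 (divr_gt0 C'0 e0).
have MC : (- M < `|M| + 1)%R by have := ler_norm (- M); rewrite normrN; lra.
have tailM := near_expR_tail_le_expR p_oo C10 MC.
apply: (@exp_rate_le _ _ _ 3%R) => //.
have /cvgryPgt p_gt := p_oo.
near=> n.
have n0 : (0 < n)%N by near: n; exact: nbhs_infty_gt.
have p0 : (0 < p n)%R by near: n; exact: p_gt.
have nN : (N <= n)%N by near: n; exact: nbhs_infty_ge.
have a0 : (0 <= C' * `|r n|)%R by rewrite mulr_ge0 ?normr_ge0 ?(ltW C'0).
have := expected_sign_err_le (P n) (mv n) (mvb n) (mw n) (vb_gt0 n) n0 p0 e0 a0.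
move/le_trans; apply.
rewrite -[3%R]/(1 + 1 + 1)%:R !natrD !mulrDl mul1r !EFinD.
apply: leeD; first apply: leeD.
- by near: n; exact: noiseM.
- rewrite lee_fin mulrAC; near: n; exact: rM.
- apply: le_trans (tailN n nN) _; rewrite lee_fin; near: n; exact: tailM.
Unshelve. all: by end_near.
Qed.

End sign_recovery.

Theorem lemmaE1 (R : realType) (d : nat -> measure_display)
  (T : forall n, measurableType (d n)) (P : forall n, probability (T n) R)
  (v w vb : forall n, T n -> 'I_n -> R) (p : nat -> R)
  (mv : forall n (i : 'I_n), measurable_fun setT (fun x => v n x i))
  (mw : forall n (i : 'I_n), measurable_fun setT (fun x => w n x i))
  (mvb : forall n (i : 'I_n), measurable_fun setT (fun x => vb n x i))
  (hdelta : forall n (x : T n), (0 < min_abs (vb n x))%E)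
  (hp : p @ \oo --> +oo)
  (hsmall : little_oP P (fun n x => sign_dist (p n) (v n x) (vb n x) (w n x))
     (fun n x => ((n%:R `^ (p n)^-1)%:E * min_abs (vb n x))%E) p) :
  (limn_esup (fun n => ((p n)^-1)%:E *
      elog ((n%:R)^-1%:E * \int[P n]_x ((sign_err (v n x) (vb n x))%:R)%:E))
   <= limf_esup (fun eps : R =>
        limn_esup (fun n => ((p n)^-1)%:E *
          elog ((n%:R)^-1%:E * \sum_(i < n)
            P n [set x | ((1 - eps) * `|vb n x i| <= - w n x i * Num.sg (vb n x i))%R])))
      (0 : R)^'+)%E.
Proof.
apply: limf_esup_ge_near; near=> eps.
apply: (exp_rate_sign_err_le mv mw mvb hdelta hp hsmall).
by near: eps; exact: nbhs_right_gt.
Unshelve. all: by end_near.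
Qed.
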